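(* Let $f:\mathcal C_n\to\mathbb R$, let $\nu$ be the law of $X_n^f$, and let $D=\mathcal D(f)$ and $L_2$ be as in the context. Let $\varepsilon>0$ and let $\theta\in\mathbb R^n$ satisfy $\|\theta\|_2\le\varepsilon\sqrt n$, $\|\theta\|_\infty\le\tfrac14$, and $$\mathrm{Tr}\,\mathcal H(\tau_\theta\nu)\le256\,\frac{n^{1/3}D^{2/3}}{\varepsilon^{2/3}}.$$ Let $\xi_\theta$ be the product measure on $\mathcal C_n$ with the same coordinate means as $\tau_\theta\nu$, and let $Y\sim\xi_\theta$. Then $$\mathbb E\big\|\tanh(\nabla f(Y))-\mathbb EY\big\|_1\le64L_2\frac{n^{2/3}D^{1/3}}{\varepsilon^{1/3}}+\varepsilon n.$$
   Context: Notation. $\mathcal C_n=\{-1,1\}^n$ and $\mu$ is the uniform measure on $\mathcal C_n$. $\|x\|_1=\sum_i|x_i|$, and $\tanh$ acts entrywise. Discrete calculus. $\partial_if(y)=\tfrac12\big(f(y^{i\to1})-f(y^{i\to-1})\big)$ and $\nabla f=(\partial_if)_i$. Gibbs distribution. $X_n^f$ is the random vector in $\mathcal C_n$ with $\Pr[X_n^f=x]\propto e^{f(x)}$. Parameters. $\mathcal D(f)=\mathbb E\sup_{v\in\{\nabla f(y):y\in\mathcal C_n\}\cup\{0\}}\langle v,\Gamma\rangle$, with $\Gamma$ standard Gaussian in $\mathbb R^n$. $L_2=\max\{1,\max_{x\ne y\in\mathcal C_n}\|\nabla f(x)-\nabla f(y)\|_1/\|x-y\|_1\}$. Tilts. For $\theta\in\mathbb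 R^n$, $\frac{d\tau_\theta\nu}{d\nu}(y)=e^{\langle\theta,y\rangle}/\int e^{\langle\theta,z\rangle}d\nu(z)$. The matrix $\mathcal H$. For a fully supported probability measure $\tilde\nu$ on $\mathcal C_n$, let $f_{\tilde\nu}=\log(d\tilde\nu/d\mu)$ and $$\mathcal H(\tilde\nu)=\int\tanh(\nabla f_{\tilde\nu})^{\otimes2}d\tilde\nu-\Big(\int\tanh(\nabla f_{\tilde\nu})d\tilde\nu\Big)^{\otimes2},$$ the covariance matrix of $\tanh(\nabla f_{\tilde\nu}(X))$ for $X\sim\tilde\nu$. *)

From Stdlib Require Import Reals Lra Lia Arith.
Open Scope R_scope.

(** Vectors of R^n are represented as functions nat -> R (only the
    coordinates i < n matter). *)
Definition vec := nat -> R.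

Fixpoint rsum (N : nat) (g : nat -> R) : R :=
  match N with O => 0 | S m => rsum m g + g m end.
Fixpoint rprod (N : nat) (g : nat -> R) : R :=
  match N with O => 1 | S m => rprod m g * g m end.
Fixpoint rmaxl (N : nat) (a : R) (g : nat -> R) : R :=
  match N with O => a | S m => Rmax (rmaxl m a g) (g m) end.

(** The hypercube C_n = {-1,1}^n: its 2^n points are enumerated by
    k < 2^n, with coordinate i equal to 1 iff bit i of k is set. *)
Definition ncube (n : nat) : nat := (2 ^ n)%nat.
Definition cube_pt (k : nat) : vec :=
  fun i => if Nat.testbit k i then 1 else -1.

Definition dot (n : nat) (a b : vec) : R := rsum n (fun i => a i * b i).
Definition norm1 (n : nat) (a : vec) : R := rsum n (fun i => Rabs (a i)).
Definition norm2 (n : nat) (a : vec) : R := sqrt (rsum n (fun i => a i ^ 2)).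


Definition upd (x : vec) (i : nat) (b : R) : vec :=
  fun j => if Nat.eqb j i then b else x j.
Definition dpart (f : vec -> R) (i : nat) (y : vec) : R :=
  (f (upd y i 1) - f (upd y i (-1))) / 2.

(** A probability measure on C_n is given by its mass function p
    (evaluated on cube points). Expectation: *)
Definition expect (n : nat) (p : vec -> R) (g : vec -> R) : R :=
  rsum (ncube n) (fun k => p (cube_pt k) * g (cube_pt k)).

Definition gibbs (n : nat) (f : vec -> R) : vec -> R :=
  fun x => exp (f x) / rsum (ncube n) (fun k => exp (f (cube_pt k))).

Definition tilt (n : nat) (theta : vec) (p : vec -> R) : vec -> R :=
  fun x => p x * exp (dot n theta x) / expect n p (fun y => exp (dot n theta y)).

(** f_{nu~} = log (d nu~ / d mu), mu uniform on C_n (mass 2^{-n}). *)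
Definition log_dens (n : nat) (p : vec -> R) : vec -> R :=
  fun x => ln (INR (ncube n) * p x).

Definition Hmat (n : nat) (p : vec -> R) (i j : nat) : R :=
  let t := fun l x => tanh (dpart (log_dens n p) l x) in
  expect n p (fun x => t i x * t j x)
  - expect n p (t i) * expect n p (t j).

Definition trace (n : nat) (M : nat -> nat -> R) : R := rsum n (fun i => M i i).

Definition prod_meas (n : nat) (m : vec) : vec -> R :=
  fun x => rprod n (fun i => (1 + m i * x i) / 2).

Definition xi_theta (n : nat) (f : vec -> R) (theta : vec) : vec -> R :=
  prod_meas n (fun i => expect n (tilt n theta (gibbs n f)) (fun x => x i)).

Definition grad_diff_ratio (n : nat) (f : vec -> R) (k l : nat) : R :=
  norm1 n (fun i => dpart f i (cube_pt k) - dpart f i (cube_pt l))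
  / norm1 n (fun i => cube_pt k i - cube_pt l i).
Definition L2 (n : nat) (f : vec -> R) : R :=
  rmaxl (ncube n) 1 (fun k => rmaxl (ncube n) 1 (fun l =>
    if Nat.eqb k l then 1 else grad_diff_ratio n f k l)).

(** D(f) = E sup_{v in {grad f(y)} u {0}} <v, Gamma>, Gamma ~ N(0, I_n).
    The Gaussian expectation is the (absolutely convergent) integral of the
    continuous function  z |-> sup(z) * phi_n(z)  over R^n; we characterise
    its value as the limit of Riemann sums over the grid (Z/K)^n cap [-K,K]^n,
    K = N+1, as N -> infinity. *)
Definition sup_lin (n : nat) (f : vec -> R) (z : vec) : R :=
  rmaxl (ncube n) 0 (fun k => dot n (fun i => dpart f i (cube_pt k)) z).
Definition gauss_dens (n : nat) (z : vec) : R :=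
  exp (- dot n z z / 2) / (sqrt (2 * PI)) ^ n.
Definition grid_M (N : nat) : nat := (2 * S N * S N + 1)%nat.
Definition grid_pt (N : nat) (j : nat) : vec :=
  fun i => - INR (S N) + INR ((j / grid_M N ^ i) mod grid_M N) / INR (S N).
Definition gauss_riemann (n : nat) (f : vec -> R) (N : nat) : R :=
  rsum (grid_M N ^ n)
    (fun j => sup_lin n f (grid_pt N j) * gauss_dens n (grid_pt N j))
  * (/ INR (S N)) ^ n.
Definition is_Df (n : nat) (f : vec -> R) (D : R) : Prop :=
  Un_cv (gauss_riemann n f) D.

(** Real power x^a for x >= 0, a > 0, with 0^a = 0 (Rpower 0 a = 1 in Stdlib). *)
Definition pw (x a : R) : R := if Rlt_dec 0 x then Rpower x a else 0.

From Stdlib Require Import Reals Lra Lia Arith FunctionalExtensionality.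
Open Scope R_scope.

(** Let p be the tilted law, m its vector of coordinate means and
    h(y) = |tanh grad f(y) - m|_1.  The product measure xi_theta is reached from p
    by resampling the coordinates one at a time as independent signs of means m_k.
    Since p is invariant when coordinate k is resampled from its own conditional
    law, whose mean is t_k = tanh d_k log(dp/dmu), the k-th step changes E_p v by
    exactly E_p[(t_k - m_k) d_k v].  The discrete derivatives of h are at most L_2
    (tanh is 1-Lipschitz), hence E_xi h <= E_p h + L_2 sum_k E_p|t_k - m_k|, and by
    Cauchy-Schwarz sum_k E_p|t_k - m_k| <= sqrt(n Tr H(p)).  Finally
    grad log(dp/dmu) = grad f + theta, so E_p h <= sum_k E_p|t_k - m_k| + |theta|_1,
    and |theta|_1 <= sqrt n |theta|_2 <= eps n. *)

Lemma cosh_pos x : 0 < cosh x.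
Proof. unfold cosh. pose proof (exp_pos x). pose proof (exp_pos (- x)). lra. Qed.

Lemma cosh_sq_sub_sinh_sq x : cosh x * cosh x - sinh x * sinh x = 1.
Proof.
  unfold cosh, sinh.
  assert (exp x * exp (- x) = 1) by (rewrite <- exp_plus, Rplus_opp_r; apply exp_0).
  nra.
Qed.

Lemma derivable_pt_lim_tanh x : derivable_pt_lim tanh x (/ (cosh x * cosh x)).
Proof.
  pose proof (cosh_pos x) as Hc.
  replace (/ (cosh x * cosh x))
    with ((cosh x * cosh x - sinh x * sinh x) / (cosh x)²)
    by (rewrite cosh_sq_sub_sinh_sq; unfold Rsqr; field; lra).
  apply derivable_pt_lim_div;
    [apply derivable_pt_lim_sinh | apply derivable_pt_lim_cosh | lra].
Qed.

Lemma tanh_lipschitz a b : Rabs (tanh a - tanh b) <= Rabs (a - b).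
Proof.
  destruct (MVT_abs tanh (fun x => / (cosh x * cosh x)) b a) as [c [-> _]].
  { intros c _. apply derivable_pt_lim_tanh. }
  pose proof (cosh_sq_sub_sinh_sq c). pose proof (cosh_pos c).
  assert (0 < / (cosh c * cosh c) <= 1).
  { split; [apply Rinv_0_lt_compat; nra|].
    rewrite <- Rinv_1. apply Rinv_le_contravar; nra. }
  rewrite Rabs_pos_eq by lra.
  pose proof (Rabs_pos (a - b)). nra.
Qed.

Lemma tanh_half_ln_ratio a b :
  0 < a -> 0 < b -> tanh ((ln a - ln b) / 2) = (a - b) / (a + b).
Proof.
  intros Ha Hb. unfold tanh, sinh, cosh.
  set (y := (ln a - ln b) / 2).
  assert (Hy : exp y * exp y * b = a).
  { rewrite <- exp_plus. replace (y + y) with (ln a + - ln b) by (unfold y; field).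
    rewrite exp_plus, exp_Ropp, !exp_ln by auto. field. lra. }
  rewrite exp_Ropp. pose proof (exp_pos y).
  rewrite <- Hy. field. split; nra.
Qed.

Lemma Rabs_le_bounds a b : Rabs a <= b -> - b <= a <= b.
Proof. unfold Rabs. destruct (Rcase_abs a); intros; lra. Qed.

(** * Finite sums *)

Lemma rsum_ext N g g' :
  (forall k, (k < N)%nat -> g k = g' k) -> rsum N g = rsum N g'.
Proof.
  induction N; simpl; intros H; auto.
  rewrite IHN, H by (intros; try apply H; lia). reflexivity.
Qed.

Lemma rsum_le N g g' :
  (forall k, (k < N)%nat -> g k <= g' k) -> rsum N g <= rsum N g'.
Proof.
  induction N; simpl; intros H; [lra|].
  pose proof (H N ltac:(lia)). pose proof (IHN ltac:(intros; apply H; lia)). lra.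
Qed.

Lemma rsum_const N c : rsum N (fun _ => c) = INR N * c.
Proof. induction N; simpl rsum; [simpl; lra|]. rewrite IHN, S_INR. lra. Qed.

Lemma rsum_nonneg N g : (forall k, (k < N)%nat -> 0 <= g k) -> 0 <= rsum N g.
Proof.
  intros H. rewrite <- (Rmult_0_r (INR N)), <- rsum_const. apply rsum_le; auto.
Qed.

Lemma rsum_pos N g :
  (0 < N)%nat -> (forall k, (k < N)%nat -> 0 < g k) -> 0 < rsum N g.
Proof.
  destruct N as [|N]; intros HN H; [lia|]. simpl.
  assert (0 <= rsum N g) by (apply rsum_nonneg; intros; left; apply H; lia).
  pose proof (H N ltac:(lia)). lra.
Qed.

Lemma rsum_plus N g g' : rsum N (fun k => g k + g' k) = rsum N g + rsum N g'.
Proof. induction N; simpl; [lra|]. rewrite IHN. lra. Qed.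

Lemma rsum_minus N g g' : rsum N (fun k => g k - g' k) = rsum N g - rsum N g'.
Proof. induction N; simpl; [lra|]. rewrite IHN. lra. Qed.

Lemma rsum_scal N c g : rsum N (fun k => c * g k) = c * rsum N g.
Proof. induction N; simpl; [lra|]. rewrite IHN. lra. Qed.

Lemma rsum_abs N g : Rabs (rsum N g) <= rsum N (fun k => Rabs (g k)).
Proof.
  induction N; simpl; [rewrite Rabs_R0; lra|].
  eapply Rle_trans; [apply Rabs_triang|]. lra.
Qed.

Lemma rsum_swap A B (F : nat -> nat -> R) :
  rsum A (fun k => rsum B (F k)) = rsum B (fun i => rsum A (fun k => F k i)).
Proof.
  induction A; simpl.
  - induction B; simpl; lra.
  - rewrite IHA, <- rsum_plus. reflexivity.
Qed.

Lemma rsum_add A B g : rsum (A + B) g = rsum A g + rsum B (fun k => g (A + k)%nat).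
Proof.
  induction B; simpl; [rewrite Nat.add_0_r; lra|].
  rewrite Nat.add_succ_r. simpl. rewrite IHB. lra.
Qed.

Lemma rsum_telescope N (a : nat -> R) : rsum N (fun k => a k - a (S k)) = a O - a N.
Proof. induction N; simpl; [lra|]. rewrite IHN. lra. Qed.

Lemma rsum_single N i (a : nat -> R) : (i < N)%nat ->
  (forall k, (k < N)%nat -> k <> i -> a k = 0) -> rsum N a = a i.
Proof.
  induction N; intros Hi H; [lia|]. simpl.
  destruct (Nat.eq_dec i N) as [->|].
  - rewrite (rsum_ext _ _ (fun _ => 0)), rsum_const by (intros; apply H; lia). lra.
  - rewrite IHN, (H N) by (try lia; intros; apply H; lia). lra.
Qed.

(* Lagrange's identity: sum_(i,j) (s i - s j)^2 = 2 (N sum_i s i^2 - (sum_i s i)^2). *)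
Lemma rsum_sq_le N s : rsum N s ^ 2 <= INR N * rsum N (fun i => s i ^ 2).
Proof.
  set (S := rsum N s). set (Q := rsum N (fun i => s i ^ 2)).
  assert (Hrow : forall i, rsum N (fun j => (s i - s j) ^ 2)
                   = INR N * s i ^ 2 + -2 * s i * S + Q).
  { intros i.
    rewrite (rsum_ext N _ (fun j => s i ^ 2 + -2 * s i * s j + s j ^ 2)) by (intros; ring).
    rewrite !rsum_plus, rsum_const, rsum_scal. reflexivity. }
  assert (Hall : rsum N (fun i => rsum N (fun j => (s i - s j) ^ 2))
                   = 2 * (INR N * Q - S ^ 2)).
  { rewrite (rsum_ext N _ (fun i => INR N * s i ^ 2 + -2 * S * s i + Q))
      by (intros; rewrite Hrow; ring).
    rewrite !rsum_plus, rsum_const, !rsum_scal. fold S Q. ring. }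
  assert (0 <= rsum N (fun i => rsum N (fun j => (s i - s j) ^ 2)))
    by (apply rsum_nonneg; intros; apply rsum_nonneg; intros; apply pow2_ge_0).
  lra.
Qed.

Lemma rprod_ext N g g' :
  (forall k, (k < N)%nat -> g k = g' k) -> rprod N g = rprod N g'.
Proof.
  induction N; simpl; intros H; auto.
  rewrite IHN, H by (intros; try apply H; lia). reflexivity.
Qed.

(** * The discrete cube *)

Lemma lt_pow2_iff_high_bits a N :
  (a < 2 ^ N)%nat <-> (forall m, (N <= m)%nat -> Nat.testbit a m = false).
Proof.
  split.
  - intros H m Hm. destruct (Nat.eq_dec a 0) as [->|]; [apply Nat.bits_0|].
    apply Nat.bits_above_log2. apply Nat.log2_lt_pow2 in H; lia.
  - intros H. destruct (Nat.eq_dec a 0) as [->|].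
    { pose proof (Nat.pow_nonzero 2 N). lia. }
    apply Nat.log2_lt_pow2; [lia|].
    destruct (Nat.lt_ge_cases (Nat.log2 a) N) as [|Hge]; auto.
    pose proof (Nat.bit_log2 a ltac:(lia)) as Hb. rewrite (H _ Hge) in Hb. discriminate.
Qed.

Lemma upd_eq x i b : upd x i b i = b.
Proof. unfold upd. rewrite Nat.eqb_refl. reflexivity. Qed.

Lemma upd_neq x i b j : j <> i -> upd x i b j = x j.
Proof. intros. unfold upd. destruct (Nat.eqb_spec j i); [lia|reflexivity]. Qed.

Lemma upd_upd x i a b : upd (upd x i a) i b = upd x i b.
Proof.
  apply functional_extensionality; intros j. unfold upd. destruct (Nat.eqb j i); auto.
Qed.

Lemma upd_comm x i j a b : i <> j -> upd (upd x i a) j b = upd (upd x j b) i a.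
Proof.
  intros H. apply functional_extensionality; intros k. unfold upd.
  destruct (Nat.eqb_spec k j), (Nat.eqb_spec k i); auto; lia.
Qed.

Lemma cube_pt_high k n m : (k < 2 ^ n)%nat -> (n <= m)%nat -> cube_pt k m = -1.
Proof.
  intros Hk Hm. unfold cube_pt. rewrite (proj1 (lt_pow2_iff_high_bits k n) Hk m Hm).
  reflexivity.
Qed.

Lemma upd_cube_pt_high k n : (k < 2 ^ n)%nat -> upd (cube_pt k) n (-1) = cube_pt k.
Proof.
  intros Hk. apply functional_extensionality; intros j. unfold upd.
  destruct (Nat.eqb_spec j n) as [->|]; auto.
  symmetry. apply (cube_pt_high k n); lia.
Qed.

Lemma cube_pt_add_pow2 k n : (k < 2 ^ n)%nat -> cube_pt (2 ^ n + k) = upd (cube_pt k) n 1.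
Proof.
  intros Hk. apply functional_extensionality; intros j. unfold upd, cube_pt.
  destruct (Nat.eqb_spec j n) as [->|Hjn].
  - rewrite (Nat.testbit_unique (2 ^ n + k) n true k 0); simpl; auto; lia.
  - destruct (Nat.lt_ge_cases j n).
    + rewrite <- (Nat.mod_pow2_bits_low (2 ^ n + k) n j) by auto.
      rewrite Nat.add_comm, <- (Nat.mul_1_l (2 ^ n)) at 1.
      rewrite Nat.Div0.mod_add, Nat.mod_small; auto.
    + assert (2 ^ n + k < 2 ^ S n)%nat by (simpl; lia).
      rewrite (proj1 (lt_pow2_iff_high_bits _ _) H0 j),
        (proj1 (lt_pow2_iff_high_bits _ _) Hk j) by lia.
      reflexivity.
Qed.

Lemma upd_cube_pt_1 k i : upd (cube_pt k) i 1 = cube_pt (Nat.setbit k i).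
Proof.
  apply functional_extensionality; intros j. unfold upd, cube_pt.
  destruct (Nat.eqb_spec j i) as [->|].
  - rewrite Nat.setbit_eq. reflexivity.
  - rewrite Nat.setbit_neq; auto.
Qed.

Lemma upd_cube_pt_m1 k i : upd (cube_pt k) i (-1) = cube_pt (Nat.clearbit k i).
Proof.
  apply functional_extensionality; intros j. unfold upd, cube_pt.
  destruct (Nat.eqb_spec j i) as [->|].
  - rewrite Nat.clearbit_eq. reflexivity.
  - rewrite Nat.clearbit_neq; auto.
Qed.

Lemma setbit_lt_pow2 k i n :
  (k < 2 ^ n)%nat -> (i < n)%nat -> (Nat.setbit k i < 2 ^ n)%nat.
Proof.
  intros Hk Hi. apply lt_pow2_iff_high_bits. intros m Hm.
  rewrite Nat.setbit_neq by lia. apply (proj1 (lt_pow2_iff_high_bits _ _) Hk); auto.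
Qed.

Lemma clearbit_lt_pow2 k i n : (k < 2 ^ n)%nat -> (Nat.clearbit k i < 2 ^ n)%nat.
Proof.
  intros Hk. apply lt_pow2_iff_high_bits. intros m Hm.
  rewrite Nat.clearbit_eqb, (proj1 (lt_pow2_iff_high_bits _ _) Hk); auto.
Qed.

Definition on_cube (n : nat) (x : vec) : Prop :=
  exists k, (k < 2 ^ n)%nat /\ x = cube_pt k.

Lemma on_cube_pt n k : (k < 2 ^ n)%nat -> on_cube n (cube_pt k).
Proof. intros; exists k; auto. Qed.

Lemma on_cube_upd n x i b :
  on_cube n x -> (i < n)%nat -> b = 1 \/ b = -1 -> on_cube n (upd x i b).
Proof.
  intros [k [Hk ->]] Hi [-> | ->].
  - rewrite upd_cube_pt_1. apply on_cube_pt, setbit_lt_pow2; auto.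
  - rewrite upd_cube_pt_m1. apply on_cube_pt, clearbit_lt_pow2; auto.
Qed.

Lemma on_cube_coord n x i : on_cube n x -> x i = 1 \/ x i = -1.
Proof. intros [k [_ ->]]. unfold cube_pt. destruct (Nat.testbit k i); auto. Qed.

Lemma on_cube_high n x m : on_cube n x -> (n <= m)%nat -> x m = -1.
Proof. intros [k [Hk ->]] Hm. apply (cube_pt_high k n); auto. Qed.

Definition cube_sum (n : nat) (G : vec -> R) : R := rsum (ncube n) (fun k => G (cube_pt k)).

Lemma ncube_pos n : (0 < ncube n)%nat.
Proof. unfold ncube. pose proof (Nat.pow_nonzero 2 n). lia. Qed.

Lemma cube_sum_ext n G G' :
  (forall x, on_cube n x -> G x = G' x) -> cube_sum n G = cube_sum n G'.
Proof. intros H. apply rsum_ext. intros. apply H, on_cube_pt; auto. Qed.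

Lemma cube_sum_le n G G' :
  (forall x, on_cube n x -> G x <= G' x) -> cube_sum n G <= cube_sum n G'.
Proof. intros H. apply rsum_le. intros. apply H, on_cube_pt; auto. Qed.

Lemma cube_sum_pos n G : (forall x, on_cube n x -> 0 < G x) -> 0 < cube_sum n G.
Proof. intros H. apply rsum_pos; [apply ncube_pos|]. intros. apply H, on_cube_pt; auto. Qed.

Lemma cube_sum_abs n G : Rabs (cube_sum n G) <= cube_sum n (fun x => Rabs (G x)).
Proof. apply rsum_abs. Qed.

Lemma cube_sum_plus n G G' : cube_sum n (fun x => G x + G' x) = cube_sum n G + cube_sum n G'.
Proof. apply rsum_plus. Qed.

Lemma cube_sum_succ n G :
  cube_sum (S n) G = cube_sum n (fun x => G (upd x n 1)) + cube_sum n (fun x => G (upd x n (-1))).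
Proof.
  unfold cube_sum, ncube. replace (2 ^ S n)%nat with (2 ^ n + 2 ^ n)%nat by (simpl; lia).
  rewrite rsum_add, Rplus_comm. f_equal; apply rsum_ext; intros k Hk.
  - rewrite cube_pt_add_pow2; auto.
  - rewrite upd_cube_pt_high; auto.
Qed.

Lemma cube_sum_symmetrize n i G : (i < n)%nat ->
  cube_sum n G = cube_sum n (fun x => (G (upd x i 1) + G (upd x i (-1))) / 2).
Proof.
  revert i G. induction n as [|n IH]; intros i G Hi; [lia|].
  rewrite !cube_sum_succ. destruct (Nat.eq_dec i n) as [->|].
  - rewrite <- !cube_sum_plus. apply cube_sum_ext. intros x _. rewrite !upd_upd. lra.
  - rewrite (IH i (fun x => G (upd x n 1))), (IH i (fun x => G (upd x n (-1)))) by lia.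
    f_equal; apply cube_sum_ext; intros x _; rewrite !(upd_comm _ n i) by lia; reflexivity.
Qed.

Lemma expect_cube_sum n p g : expect n p g = cube_sum n (fun x => p x * g x).
Proof. reflexivity. Qed.

Lemma expect_ext n p g g' :
  (forall x, on_cube n x -> g x = g' x) -> expect n p g = expect n p g'.
Proof. intros H. rewrite !expect_cube_sum. apply cube_sum_ext. intros. rewrite H; auto. Qed.

Lemma expect_le n p g g' : (forall x, on_cube n x -> 0 <= p x) ->
  (forall x, on_cube n x -> g x <= g' x) -> expect n p g <= expect n p g'.
Proof.
  intros Hp H. rewrite !expect_cube_sum. apply cube_sum_le. intros.
  apply Rmult_le_compat_l; auto.
Qed.

Lemma expect_nonneg n p g : (forall x, on_cube n x -> 0 <= p x) ->
  (forall x, on_cube n x -> 0 <= g x) -> 0 <= expect n p g.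
Proof.
  intros Hp H. apply rsum_nonneg. intros. apply Rmult_le_pos; [apply Hp|apply H];
  apply on_cube_pt; auto.
Qed.

Lemma expect_plus n p g g' :
  expect n p (fun x => g x + g' x) = expect n p g + expect n p g'.
Proof. unfold expect. rewrite <- rsum_plus. apply rsum_ext; intros; ring. Qed.

Lemma expect_minus n p g g' :
  expect n p (fun x => g x - g' x) = expect n p g - expect n p g'.
Proof. unfold expect. rewrite <- rsum_minus. apply rsum_ext; intros; ring. Qed.

Lemma expect_scal n p c g : expect n p (fun x => c * g x) = c * expect n p g.
Proof. unfold expect. rewrite <- rsum_scal. apply rsum_ext; intros; ring. Qed.

Lemma expect_const n p c : expect n p (fun _ => c) = c * expect n p (fun _ => 1).
Proof. rewrite <- expect_scal. apply expect_ext; intros; ring. Qed.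

Lemma expect_rsum n p N (F : nat -> vec -> R) :
  expect n p (fun x => rsum N (fun i => F i x)) = rsum N (fun i => expect n p (F i)).
Proof.
  unfold expect. rewrite <- rsum_swap. apply rsum_ext. intros. rewrite rsum_scal. reflexivity.
Qed.

(** * Product measures and coordinatewise resampling *)

(* [resample a k v] averages [v] over a fresh sign of mean [a] in coordinate [k]. *)
Definition resample (a : R) (k : nat) (v : vec -> R) : vec -> R :=
  fun x => (1 + a) / 2 * v (upd x k 1) + (1 - a) / 2 * v (upd x k (-1)).

Fixpoint resample_below (m : vec) (k : nat) (v : vec -> R) : vec -> R :=
  match k with O => v | S k' => resample_below m k' (resample (m k') k' v) end.

Lemma resample_comm a b i j v :
  i <> j -> resample a i (resample b j v) = resample b j (resample a i v).
Proof.
  intros H. apply functional_extensionality; intros x. unfold resample.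
  rewrite !(upd_comm _ i j) by auto. ring.
Qed.

Lemma resample_below_resample m k a j v : (k <= j)%nat ->
  resample_below m k (resample a j v) = resample a j (resample_below m k v).
Proof.
  revert v. induction k; intros v H; simpl; auto.
  rewrite resample_comm, IHk by lia. reflexivity.
Qed.

Lemma resample_below_succ m k v :
  resample_below m (S k) v = resample (m k) k (resample_below m k v).
Proof. apply resample_below_resample. lia. Qed.

Lemma resample_below_local m k v x y :
  (forall j, (k <= j)%nat -> x j = y j) -> resample_below m k v x = resample_below m k v y.
Proof.
  revert x y. induction k; intros x y H.
  - simpl. f_equal. apply functional_extensionality; intros j. apply H; lia.
  - rewrite resample_below_succ. unfold resample.
    f_equal; f_equal; apply IHk; intros j Hj; unfold upd;
      destruct (Nat.eqb_spec j k); auto; apply H; lia.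
Qed.

Lemma resample_below_on_cube m n v x :
  on_cube n x -> resample_below m n v x = resample_below m n v (cube_pt 0).
Proof.
  intros Hx. apply resample_below_local. intros j Hj.
  rewrite (on_cube_high n x j) by auto. unfold cube_pt. rewrite Nat.bits_0. reflexivity.
Qed.

Lemma dpart_resample_below_bound m n k i v c :
  (forall j, (j < n)%nat -> Rabs (m j) <= 1) -> (k <= i)%nat -> (i < n)%nat ->
  (forall y, on_cube n y -> Rabs (dpart v i y) <= c) ->
  forall y, on_cube n y -> Rabs (dpart (resample_below m k v) i y) <= c.
Proof.
  intros Hm. revert v. induction k; intros v Hk Hi Hv; simpl; auto.
  apply IHk; try lia. intros y Hy.
  assert (E : dpart (resample (m k) k v) i y =
     (1 + m k) / 2 * dpart v i (upd y k 1) + (1 - m k) / 2 * dpart v i (upd y k (-1))).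
  { unfold dpart, resample. rewrite !(upd_comm _ i k) by lia. field. }
  rewrite E.
  pose proof (Rabs_le_bounds _ _ (Hv _ (on_cube_upd n y k 1 Hy ltac:(lia) ltac:(lra)))).
  pose proof (Rabs_le_bounds _ _ (Hv _ (on_cube_upd n y k (-1) Hy ltac:(lia) ltac:(lra)))).
  pose proof (Rabs_le_bounds _ _ (Hm k ltac:(lia))).
  apply Rabs_le. nra.
Qed.

Lemma prod_meas_upd_top n m x b : prod_meas n m (upd x n b) = prod_meas n m x.
Proof. apply rprod_ext. intros. rewrite upd_neq by lia. reflexivity. Qed.

Lemma expect_prod_succ n m v :
  expect (S n) (prod_meas (S n) m) v = expect n (prod_meas n m) (resample (m n) n v).
Proof.
  rewrite !expect_cube_sum, cube_sum_succ, <- cube_sum_plus. apply cube_sum_ext. intros x _.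
  change (prod_meas (S n) m) with (fun y => prod_meas n m y * ((1 + m n * y n) / 2)).
  unfold resample. cbv beta. rewrite !prod_meas_upd_top, !upd_eq. field.
Qed.

Lemma expect_prod_resample_below n m v :
  expect n (prod_meas n m) v = resample_below m n v (cube_pt 0).
Proof.
  revert v. induction n; intros v.
  - unfold expect, prod_meas. simpl. ring.
  - rewrite expect_prod_succ, IHn. reflexivity.
Qed.

Lemma expect_prod_one n m : expect n (prod_meas n m) (fun _ => 1) = 1.
Proof.
  induction n; [unfold expect, prod_meas; simpl; ring|].
  rewrite expect_prod_succ. transitivity (expect n (prod_meas n m) (fun _ => 1)); [|exact IHn].
  apply expect_ext. intros. unfold resample. field.
Qed.

Lemma expect_prod_coord n m i : (i < n)%nat -> expect n (prod_meas n m) (fun z => z i) = m i.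
Proof.
  induction n; intros Hi; [lia|].
  rewrite expect_prod_succ. destruct (Nat.eq_dec i n) as [->|].
  - rewrite (expect_ext _ _ _ (fun _ => m n)), expect_const, expect_prod_one
      by (intros; unfold resample; rewrite !upd_eq; field).
    ring.
  - rewrite <- IHn by lia. apply expect_ext. intros. unfold resample.
    rewrite !upd_neq by lia. field.
Qed.

(** * Heat-bath dynamics of a positive measure *)

Lemma dpart_upd g k x b : dpart g k (upd x k b) = dpart g k x.
Proof. unfold dpart. rewrite !upd_upd. reflexivity. Qed.

Section HeatBath.

Variables (n : nat) (p : vec -> R).
Hypothesis p_pos : forall x, on_cube n x -> 0 < p x.

(* By [cond_mean_ratio], the conditional mean of x_k given the other coordinates. *)
Definition cond_mean (k : nat) (x : vec) : R := tanh (dpart (log_dens n p) k x).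

Lemma cond_mean_ratio k x : (k < n)%nat -> on_cube n x ->
  cond_mean k x =
  (p (upd x k 1) - p (upd x k (-1))) / (p (upd x k 1) + p (upd x k (-1))).
Proof.
  intros Hk Hx. unfold cond_mean, dpart, log_dens.
  pose proof (lt_0_INR _ (ncube_pos n)).
  pose proof (p_pos _ (on_cube_upd n x k 1 Hx Hk ltac:(lra))).
  pose proof (p_pos _ (on_cube_upd n x k (-1) Hx Hk ltac:(lra))).
  rewrite tanh_half_ln_ratio by (apply Rmult_lt_0_compat; auto).
  field. split; apply Rgt_not_eq; nra.
Qed.

(* Detailed balance: pair up the points x^{k->1} and x^{k->-1}. *)
Lemma expect_resample_cond_mean k v : (k < n)%nat ->
  expect n p (fun x => resample (cond_mean k x) k v x) = expect n p v.
Proof.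
  intros Hk. rewrite !expect_cube_sum.
  rewrite (cube_sum_symmetrize n k (fun x => p x * v x)), (cube_sum_symmetrize n k) by auto.
  apply cube_sum_ext. intros x Hx. unfold resample.
  unfold cond_mean. rewrite !dpart_upd, !upd_upd. fold (cond_mean k x).
  rewrite cond_mean_ratio by auto.
  pose proof (p_pos _ (on_cube_upd n x k 1 Hx Hk ltac:(lra))).
  pose proof (p_pos _ (on_cube_upd n x k (-1) Hx Hk ltac:(lra))).
  field. lra.
Qed.

Lemma expect_sub_resample k a v : (k < n)%nat ->
  expect n p v - expect n p (resample a k v)
  = expect n p (fun x => (cond_mean k x - a) * dpart v k x).
Proof.
  intros Hk. rewrite <- (expect_resample_cond_mean k v) at 1 by auto.
  rewrite <- expect_minus. apply expect_ext. intros. unfold resample, dpart. field.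
Qed.

Lemma expect_cond_mean k : (k < n)%nat ->
  expect n p (cond_mean k) = expect n p (fun x => x k).
Proof.
  intros Hk. rewrite <- (expect_resample_cond_mean k (fun x => x k)) by auto.
  apply expect_ext. intros. unfold resample. rewrite !upd_eq. field.
Qed.

Hypothesis p_mass : expect n p (fun _ => 1) = 1.

Lemma expect_coord_bound j : Rabs (expect n p (fun x => x j)) <= 1.
Proof.
  rewrite <- p_mass, !expect_cube_sum.
  eapply Rle_trans; [apply cube_sum_abs|]. apply cube_sum_le. intros x Hx.
  rewrite Rabs_mult, (Rabs_pos_eq (p x)) by (left; auto).
  pose proof (p_pos x Hx).
  destruct (on_cube_coord n x j Hx) as [-> | ->];
    [rewrite Rabs_R1 | rewrite Rabs_left by lra]; lra.
Qed.

(* Telescope from [p] to the product measure, resampling one coordinate at a time. *)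
Lemma expect_prod_meas_le m h c :
  (forall j, (j < n)%nat -> Rabs (m j) <= 1) ->
  (forall y i, on_cube n y -> (i < n)%nat -> Rabs (dpart h i y) <= c) ->
  expect n (prod_meas n m) h <=
  expect n p h + c * rsum n (fun k => expect n p (fun x => Rabs (cond_mean k x - m k))).
Proof.
  intros Hm Hh.
  assert (Hend : expect n p (resample_below m n h) = expect n (prod_meas n m) h).
  { rewrite expect_prod_resample_below,
      (expect_ext _ _ _ (fun _ => resample_below m n h (cube_pt 0))), expect_const, p_mass
      by (intros; apply resample_below_on_cube; auto).
    ring. }
  assert (Hstep : forall k, (k < n)%nat ->
     - (c * expect n p (fun x => Rabs (cond_mean k x - m k))) <=
     expect n p (resample_below m k h) - expect n p (resample_below m (S k) h)).
  { intros k Hk. rewrite resample_below_succ, expect_sub_resample by auto.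
    replace (- (c * expect n p (fun x => Rabs (cond_mean k x - m k))))
      with (expect n p (fun x => - c * Rabs (cond_mean k x - m k)))
      by (rewrite expect_scal; ring).
    apply expect_le; [intros; left; auto|]. intros x Hx.
    pose proof (Rabs_le_bounds _ _
      (dpart_resample_below_bound m n k k h c Hm ltac:(lia) Hk (fun y Hy => Hh y k Hy Hk) x Hx)).
    destruct (Rle_dec 0 (cond_mean k x - m k)).
    - rewrite Rabs_pos_eq by auto. nra.
    - rewrite Rabs_left by lra. nra. }
  pose proof (rsum_le n _ _ Hstep) as Hsum.
  rewrite rsum_telescope in Hsum.
  rewrite (rsum_ext n _ (fun k => -1 * (c * expect n p (fun x => Rabs (cond_mean k x - m k)))))
    in Hsum by (intros; ring).
  rewrite !rsum_scal in Hsum. simpl resample_below in Hsum. lra.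
Qed.

Lemma expect_sq_sub (t : vec -> R) c :
  expect n p (fun x => (t x - c) ^ 2) =
  expect n p (fun x => t x * t x) - 2 * c * expect n p t + c ^ 2.
Proof.
  rewrite (expect_ext n p _ (fun x => (t x * t x - (2 * c) * t x) + c ^ 2 * 1)) by (intros; ring).
  rewrite expect_plus, expect_minus, !expect_scal, p_mass. ring.
Qed.

Lemma expect_abs_le_sqrt_expect_sq (d : vec -> R) :
  expect n p (fun x => Rabs (d x)) <= sqrt (expect n p (fun x => d x ^ 2)).
Proof.
  assert (Hp : forall x, on_cube n x -> 0 <= p x) by (intros; left; auto).
  set (a := expect n p (fun x => Rabs (d x))).
  assert (Ha : 0 <= a) by (apply expect_nonneg; auto; intros; apply Rabs_pos).
  assert (Hvar : 0 <= expect n p (fun x => (Rabs (d x) - a) ^ 2))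
    by (apply expect_nonneg; auto; intros; apply pow2_ge_0).
  rewrite expect_sq_sub in Hvar.
  rewrite (expect_ext n p _ (fun x => d x ^ 2)) in Hvar
    by (intros; rewrite <- Rabs_mult, Rabs_pos_eq; [ring | nra]).
  rewrite <- (sqrt_pow2 a Ha). apply sqrt_le_1_alt. fold a in Hvar. lra.
Qed.

Lemma Hmat_diag k : (k < n)%nat ->
  Hmat n p k k = expect n p (fun x => (cond_mean k x - expect n p (fun z => z k)) ^ 2).
Proof.
  intros Hk.
  change (Hmat n p k k) with (expect n p (fun x => cond_mean k x * cond_mean k x)
                              - expect n p (cond_mean k) * expect n p (cond_mean k)).
  rewrite expect_sq_sub, !expect_cond_mean by auto. ring.
Qed.

Lemma rsum_expect_abs_dev_le :
  rsum n (fun k => expect n p (fun x => Rabs (cond_mean k x - expect n p (fun z => z k))))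
  <= sqrt (INR n * trace n (Hmat n p)).
Proof.
  assert (Hdiag : forall k, (k < n)%nat -> 0 <= Hmat n p k k).
  { intros k Hk. rewrite Hmat_diag by auto.
    apply expect_nonneg; intros; [left; auto | apply pow2_ge_0]. }
  apply Rle_trans with (rsum n (fun k => sqrt (Hmat n p k k))).
  - apply rsum_le. intros k Hk. rewrite Hmat_diag by auto.
    apply expect_abs_le_sqrt_expect_sq.
  - pose proof (rsum_sq_le n (fun k => sqrt (Hmat n p k k))) as Hcs.
    cbv beta in Hcs.
    rewrite (rsum_ext n (fun k => sqrt (Hmat n p k k) ^ 2) (fun k => Hmat n p k k)) in Hcs
      by (intros; apply pow2_sqrt; auto).
    rewrite <- (sqrt_pow2 (rsum _ _)) by (apply rsum_nonneg; intros; apply sqrt_pos).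
    apply sqrt_le_1_alt. exact Hcs.
Qed.

End HeatBath.

(** * The gradient Lipschitz constant L_2 *)

Lemma rmaxl_ge N a g k : (k < N)%nat -> g k <= rmaxl N a g.
Proof.
  induction N; intros Hk; [lia|]. simpl. destruct (Nat.eq_dec k N) as [->|].
  - apply Rmax_r.
  - eapply Rle_trans; [apply IHN; lia | apply Rmax_l].
Qed.

Lemma rmaxl_ge_init N a g : a <= rmaxl N a g.
Proof. induction N; simpl; [lra|]. eapply Rle_trans; [apply IHN | apply Rmax_l]. Qed.

Lemma L2_ge_1 n f : 1 <= L2 n f.
Proof. apply rmaxl_ge_init. Qed.

Lemma grad_diff_ratio_le_L2 n f a b :
  (a < 2 ^ n)%nat -> (b < 2 ^ n)%nat -> a <> b -> grad_diff_ratio n f a b <= L2 n f.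
Proof.
  intros Ha Hb Hab. unfold L2.
  eapply Rle_trans; [|apply (rmaxl_ge _ _ _ a Ha)].
  eapply Rle_trans; [|apply (rmaxl_ge _ _ _ b Hb)].
  cbv beta. destruct (Nat.eqb_spec a b); [lia|lra].
Qed.

Lemma norm1_upd_diff n x i : (i < n)%nat ->
  norm1 n (fun j => upd x i 1 j - upd x i (-1) j) = 2.
Proof.
  intros Hi. unfold norm1.
  rewrite (rsum_single n i) by (auto; intros; rewrite !upd_neq, Rminus_diag by auto;
    apply Rabs_R0).
  rewrite !upd_eq. replace (1 - -1) with 2 by ring. apply Rabs_pos_eq. lra.
Qed.

Lemma norm1_grad_diff_le n f y i : on_cube n y -> (i < n)%nat ->
  norm1 n (fun j => dpart f j (upd y i 1) - dpart f j (upd y i (-1))) <= 2 * L2 n f.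
Proof.
  intros [k [Hk ->]] Hi.
  assert (Hsc : Nat.setbit k i <> Nat.clearbit k i).
  { intros E. pose proof (Nat.setbit_eq k i) as Hs.
    rewrite E, Nat.clearbit_eq in Hs. discriminate. }
  pose proof (grad_diff_ratio_le_L2 n f _ _
    (setbit_lt_pow2 k i n Hk Hi) (clearbit_lt_pow2 k i n Hk) Hsc) as HL.
  unfold grad_diff_ratio in HL.
  rewrite <- upd_cube_pt_1, <- upd_cube_pt_m1, norm1_upd_diff in HL by auto.
  lra.
Qed.

Lemma dpart_norm1_tanh_grad_le n f (m : vec) y i : on_cube n y -> (i < n)%nat ->
  Rabs (dpart (fun y => norm1 n (fun j => tanh (dpart f j y) - m j)) i y) <= L2 n f.
Proof.
  intros Hy Hi.
  pose proof (norm1_grad_diff_le n f y i Hy Hi) as HG.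
  unfold dpart at 1, norm1 at 1 2, Rdiv.
  rewrite <- rsum_minus, Rabs_mult, (Rabs_pos_eq (/ 2)) by lra.
  enough (rsum_abs_le : Rabs (rsum n (fun j =>
      Rabs (tanh (dpart f j (upd y i 1)) - m j) - Rabs (tanh (dpart f j (upd y i (-1))) - m j)))
    <= norm1 n (fun j => dpart f j (upd y i 1) - dpart f j (upd y i (-1)))) by lra.
  eapply Rle_trans; [apply rsum_abs|]. apply rsum_le. intros j _.
  eapply Rle_trans; [apply Rabs_triang_inv2|].
  replace (tanh (dpart f j (upd y i 1)) - m j - (tanh (dpart f j (upd y i (-1))) - m j))
    with (tanh (dpart f j (upd y i 1)) - tanh (dpart f j (upd y i (-1)))) by ring.
  apply tanh_lipschitz.
Qed.

(** * Tilted Gibbs measures *)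

Lemma dot_upd_diff n (a x : vec) i : (i < n)%nat ->
  dot n a (upd x i 1) - dot n a (upd x i (-1)) = 2 * a i.
Proof.
  intros Hi. unfold dot. rewrite <- rsum_minus.
  rewrite (rsum_single n i) by (auto; intros; rewrite !upd_neq by auto; ring).
  rewrite !upd_eq. ring.
Qed.

Lemma gibbs_pos n f x : 0 < gibbs n f x.
Proof.
  apply Rdiv_lt_0_compat; [apply exp_pos|].
  apply rsum_pos; [apply ncube_pos | intros; apply exp_pos].
Qed.

Section Tilt.

Variables (n : nat) (theta : vec) (p : vec -> R).
Hypothesis p_pos : forall x, on_cube n x -> 0 < p x.

Lemma tilt_normalizer_pos : 0 < expect n p (fun y => exp (dot n theta y)).
Proof.
  rewrite expect_cube_sum. apply cube_sum_pos. intros.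
  apply Rmult_lt_0_compat; [auto | apply exp_pos].
Qed.

Lemma tilt_pos x : on_cube n x -> 0 < tilt n theta p x.
Proof.
  intros Hx. pose proof tilt_normalizer_pos.
  apply Rdiv_lt_0_compat; auto. apply Rmult_lt_0_compat; [auto | apply exp_pos].
Qed.

Lemma tilt_mass : expect n (tilt n theta p) (fun _ => 1) = 1.
Proof.
  pose proof tilt_normalizer_pos.
  transitivity (/ expect n p (fun y => exp (dot n theta y))
                * expect n p (fun y => exp (dot n theta y))).
  - rewrite <- expect_scal. apply rsum_ext. intros. unfold tilt. field. lra.
  - field. lra.
Qed.

End Tilt.

Lemma dpart_log_dens_tilt_gibbs n f theta i x : (i < n)%nat ->
  dpart (log_dens n (tilt n theta (gibbs n f))) i x = dpart f i x + theta i.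
Proof.
  intros Hi.
  set (Zg := rsum (ncube n) (fun k => exp (f (cube_pt k)))).
  set (Z := expect n (gibbs n f) (fun y => exp (dot n theta y))).
  assert (HZg : 0 < Zg) by (apply rsum_pos; [apply ncube_pos | intros; apply exp_pos]).
  assert (HZ : 0 < Z) by (apply tilt_normalizer_pos; intros; apply gibbs_pos).
  pose proof (lt_0_INR _ (ncube_pos n)).
  assert (E : forall y, log_dens n (tilt n theta (gibbs n f)) y
                        = ln (INR (ncube n) / (Zg * Z)) + (f y + dot n theta y)).
  { intros y. unfold log_dens, tilt. fold Z. unfold gibbs. fold Zg.
    rewrite <- ln_exp with (f y + dot n theta y), <- ln_mult
      by (try apply exp_pos; apply Rdiv_lt_0_compat; nra).
    f_equal. rewrite exp_plus. field. lra. }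
  unfold dpart. rewrite !E. pose proof (dot_upd_diff n theta x i Hi). lra.
Qed.

Lemma expect_norm1_tanh_tilt_le n f theta (m : vec) :
  expect n (tilt n theta (gibbs n f)) (fun y => norm1 n (fun i => tanh (dpart f i y) - m i))
  <= rsum n (fun k => expect n (tilt n theta (gibbs n f))
                       (fun x => Rabs (cond_mean n (tilt n theta (gibbs n f)) k x - m k)))
     + norm1 n theta.
Proof.
  set (p := tilt n theta (gibbs n f)).
  assert (Hp : forall x, on_cube n x -> 0 < p x)
    by (apply tilt_pos; intros; apply gibbs_pos).
  rewrite <- (Rmult_1_r (norm1 n theta)), <- (tilt_mass n theta (gibbs n f)),
    <- expect_const, <- expect_rsum, <- expect_plus
    by (intros; apply gibbs_pos).
  apply expect_le; [intros; left; auto|]. intros x _.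
  unfold norm1. rewrite <- rsum_plus. apply rsum_le. intros i Hi.
  unfold cond_mean, p. rewrite dpart_log_dens_tilt_gibbs by auto.
  pose proof (tanh_lipschitz (dpart f i x) (dpart f i x + theta i)) as Ht.
  replace (dpart f i x - (dpart f i x + theta i)) with (- theta i) in Ht by ring.
  rewrite Rabs_Ropp in Ht.
  replace (tanh (dpart f i x) - m i) with
    ((tanh (dpart f i x) - tanh (dpart f i x + theta i)) + (tanh (dpart f i x + theta i) - m i))
    by ring.
  eapply Rle_trans; [apply Rabs_triang|]. lra.
Qed.

Lemma norm1_le_of_norm2_le n (a : vec) c :
  norm2 n a <= c * sqrt (INR n) -> norm1 n a <= c * INR n.
Proof.
  unfold norm2, norm1. intros Ha.
  set (Q := rsum n (fun i => a i ^ 2)) in Ha.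
  assert (HQ : 0 <= Q) by (apply rsum_nonneg; intros; apply pow2_ge_0).
  pose proof (sqrt_pos Q). pose proof (sqrt_pos (INR n)). pose proof (pos_INR n).
  pose proof (sqrt_sqrt (INR n) ltac:(lra)) as Hn.
  assert (HQc : Q <= c ^ 2 * INR n).
  { rewrite <- (pow2_sqrt Q HQ), <- Hn. nra. }
  pose proof (rsum_sq_le n (fun i => Rabs (a i))) as Hcs. cbv beta in Hcs.
  rewrite (rsum_ext n (fun i => Rabs (a i) ^ 2) (fun i => a i ^ 2)) in Hcs
    by (intros; apply pow2_abs).
  assert (0 <= rsum n (fun i => Rabs (a i))) by (apply rsum_nonneg; intros; apply Rabs_pos).
  assert (0 <= c * INR n) by (rewrite <- Hn; nra).
  apply Rsqr_incr_0_var; [unfold Rsqr; fold Q in Hcs; nra | auto].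
Qed.

Lemma pw_nonneg x a : 0 <= pw x a.
Proof. unfold pw. destruct (Rlt_dec 0 x); [left; apply exp_pos | lra]. Qed.

Lemma pw_pos x a : 0 < x -> 0 < pw x a.
Proof. intros. unfold pw. destruct (Rlt_dec 0 x); [apply exp_pos | lra]. Qed.

Lemma pw_two_thirds x : pw x (2/3) = pw x (1/3) ^ 2.
Proof.
  unfold pw. destruct (Rlt_dec 0 x); [|simpl; ring].
  replace (2/3) with (1/3 + 1/3) by field. rewrite Rpower_plus. ring.
Qed.

Lemma mul_pw_one_third x : 0 <= x -> x * pw x (1/3) = pw x (2/3) ^ 2.
Proof.
  intros Hx. unfold pw. destruct (Rlt_dec 0 x); [|simpl; ring].
  rewrite <- (Rpower_1 x) at 1 by auto. rewrite <- Rpower_plus. simpl.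
  rewrite Rmult_1_r, <- Rpower_plus. f_equal. field.
Qed.

Lemma sqrt_mul_le_pw x D eps T : 0 <= x -> 0 < eps ->
  T <= 256 * (pw x (1/3) * pw D (2/3) / pw eps (2/3)) ->
  sqrt (x * T) <= 16 * (pw x (2/3) * pw D (1/3) / pw eps (1/3)).
Proof.
  intros Hx Heps HT.
  pose proof (pw_pos eps (1/3) Heps).
  set (Y := pw x (2/3) * pw D (1/3) / pw eps (1/3)).
  assert (HY : 0 <= Y).
  { apply Rmult_le_pos; [apply Rmult_le_pos; apply pw_nonneg|].
    left. apply Rinv_0_lt_compat. auto. }
  rewrite <- (sqrt_pow2 (16 * Y)) by lra. apply sqrt_le_1_alt.
  apply Rle_trans with (x * (256 * (pw x (1/3) * pw D (2/3) / pw eps (2/3)))).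
  { apply Rmult_le_compat_l; auto. }
  rewrite (pw_two_thirds D), (pw_two_thirds eps).
  replace (x * (256 * (pw x (1/3) * pw D (1/3) ^ 2 / pw eps (1/3) ^ 2)))
    with (256 * (x * pw x (1/3)) * pw D (1/3) ^ 2 / pw eps (1/3) ^ 2) by (field; lra).
  rewrite mul_pw_one_third by auto. unfold Y. right. field. lra.
Qed.

Theorem mainTheorem6 (n : nat) (f : vec -> R) (D eps : R) (theta : vec) :
  is_Df n f D ->
  0 < eps ->
  norm2 n theta <= eps * sqrt (INR n) ->
  (forall i : nat, (i < n)%nat -> Rabs (theta i) <= / 4) ->
  trace n (Hmat n (tilt n theta (gibbs n f)))
    <= 256 * (pw (INR n) (1/3) * pw D (2/3) / pw eps (2/3)) ->
  expect n (xi_theta n f theta)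
    (fun y => norm1 n (fun i => tanh (dpart f i y)
                               - expect n (xi_theta n f theta) (fun z => z i)))
  <= 64 * L2 n f * (pw (INR n) (2/3) * pw D (1/3) / pw eps (1/3)) + eps * INR n.
Proof.
  intros _ Heps Htheta _ Htrace.
  set (p := tilt n theta (gibbs n f)) in *.
  set (m := fun i => expect n p (fun x => x i)).
  assert (Hp : forall x, on_cube n x -> 0 < p x) by (apply tilt_pos; intros; apply gibbs_pos).
  assert (Hmass : expect n p (fun _ => 1) = 1) by (apply tilt_mass; intros; apply gibbs_pos).
  change (xi_theta n f theta) with (prod_meas n m).
  rewrite (expect_ext n _ _ (fun y => norm1 n (fun i => tanh (dpart f i y) - m i)))
    by (intros; apply rsum_ext; intros; rewrite expect_prod_coord; auto).
  set (S := rsum n (fun k => expect n p (fun x => Rabs (cond_mean n p k x - m k)))).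
  pose proof (expect_prod_meas_le n p Hp Hmass m _ (L2 n f)
    (fun j _ => expect_coord_bound n p Hp Hmass j)
    (fun y i => dpart_norm1_tanh_grad_le n f m y i)) as Hstein.
  pose proof (expect_norm1_tanh_tilt_le n f theta m) as Hshift.
  fold p in Hshift. fold S in Hstein, Hshift.
  pose proof (norm1_le_of_norm2_le n theta eps Htheta).
  assert (HS : S <= 16 * (pw (INR n) (2/3) * pw D (1/3) / pw eps (1/3))).
  { eapply Rle_trans; [apply rsum_expect_abs_dev_le; auto|].
    apply sqrt_mul_le_pw; auto using pos_INR. }
  assert (0 <= S).
  { apply rsum_nonneg. intros. apply expect_nonneg; intros; [left; auto | apply Rabs_pos]. }
  pose proof (L2_ge_1 n f).
  set (Y := pw (INR n) (2/3) * pw D (1/3) / pw eps (1/3)) in *.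
  assert (L2 n f * S <= L2 n f * (16 * Y)) by (apply Rmult_le_compat_l; lra).
  assert (0 <= (L2 n f - 1) * Y) by (apply Rmult_le_pos; lra).
  nra.
Qed.
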